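(* For every pair $N_1,N_2$ of phylogenetic networks over the same set $S$ of taxa, $$m(N_1,N_2)=\tfrac12|\Upsilon(N_1)\bigtriangleup\Upsilon(N_2)|.$$
   Context: A phylogenetic network on a finite set $S$ is a finite rooted directed acyclic graph whose leaves are bijectively labeled by $S$. Nodes $u,v$ (possibly in different networks) are equivalent, $u\equiv v$, if both are leaves with the same label, or for some $k\ge1$ both have exactly $k$ children which can be ordered $u_1,\dots,u_k$ and $v_1,\dots,v_k$ with $u_i\equiv v_i$ for all $i$. For a node $v$ of a network, $\kappa(v)$ is the number of nodes in that network equivalent to $v$. Nakhleh's measure: let $U(N_1),U(N_2)$ be maximal sets of pairwise non-equivalent nodes of $N_1,N_2$; for $v_1\in U(N_1)$, $\delta(v_1)=\kappa(v_1)$ if no node of $U(N_2)$ is equivalent to $v_1$, and $\delta(v_1)=\max\{0,\kappa(v_1)-\kappa(v_1')\}$ if $v_1'\in U(N_2)$ is equivalent to $v_1$; $\delta(v_2)$ for $v_2\in U(N_2)$ is defined symmetrically; and $m(N_1,N_2)=\frac12\big(\sum_{v_1\in U(N_1)}\delta(v_1)+\sum_{v_2\in U(N_2)}\delta(v_2)\big)$. The nested label $\ell(v)$ is defined by induction on height (largest length of a path to a leaf): $\ell(v)=\{i\}$ for the leaf labeled $i$, and otherwise $\ell(v)$ is the multiset of nested labels of the children of $v$. $\Upsilon(N)$ is the multiset of nested labels of all nodes of $N$ (multiplicity = number of nodes with that nested label); $\bigtriangleup$ is multiset symmetric difference (multiplicity $|M_1(x)-M_2(x)|$) and $|\cdot|$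 is the sum of multiplicities. *)

From mathcomp Require Import all_boot all_order all_algebra.
From mathcomp Require Import boolp.

Set Implicit Arguments.
Unset Strict Implicit.
Unset Printing Implicit Defensive.

Section PhyloNetworks.

Variable S : finType.

Record network := Network {
  node : finType;
  edge : rel node;
  root : node;
  leaf_lab : S -> node;
  net_acyclic : forall u v, edge u v -> ~~ connect edge v u;
  net_root_source : forall u, ~~ edge u root;
  net_rooted : forall v, connect edge root v;
  net_lab_inj : injective leaf_lab;
  net_leaves : forall v, [forall w, ~~ edge v w] = (v \in codom leaf_lab)
}.

Definition is_leaf (N : network) (v : node N) : bool := [forall w, ~~ edge v w].

Inductive equiv (N1 N2 : network) : node N1 -> node N2 -> Prop :=
| equiv_leaf (i : S) : equiv (leaf_lab N1 i) (leaf_lab N2 i)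
| equiv_node (u : node N1) (v : node N2) (f : node N1 -> node N2) :
    ~~ is_leaf u -> ~~ is_leaf v ->
    (forall c, edge u c -> edge v (f c)) ->
    {in edge u &, injective f} ->
    (forall d, edge v d -> exists2 c, edge u c & f c = d) ->
    (forall c, edge u c -> equiv c (f c)) ->
    equiv u v.

Definition kappa (N : network) (v : node N) : nat :=
  #|[set w : node N | `[< equiv v w >] ]|.

Definition pairwise_noneq (N : network) (U : {set node N}) : Prop :=
  forall u w, u \in U -> w \in U -> u != w -> ~ equiv u w.

Definition maximal_noneq (N : network) (U : {set node N}) : Prop :=
  pairwise_noneq U /\
  forall U' : {set node N}, U \subset U' -> pairwise_noneq U' -> U' = U.

(* delta(v1) for v1 in U1 relative to U2 (max{0, a-b} = truncated a - b) *)
Definition delta (N1 N2 : network) (U2 : {set node N2}) (v1 : node N1) : nat :=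
  match [pick w in U2 | `[< equiv v1 w >] ] with
  | None => kappa v1
  | Some w => kappa v1 - kappa w
  end.

Definition nakhleh (N1 N2 : network) (U1 : {set node N1}) (U2 : {set node N2})
  : rat :=
  ((\sum_(v1 in U1) delta U2 v1 + \sum_(v2 in U2) delta U1 v2)%N)%:R / 2%:R.

(* A nested label is a finite rooted tree: Leaf i encodes
   {i}, and Node 0 s encodes the multiset of the nested labels in s; the
   multiset is represented canonically by sorting s w.r.t. a fixed total
   order (pickle is injective), so that equality of nested labels is
   Leibniz equality. *)
Definition nlabel := GenTree.tree S.

Definition nl_le (a b : nlabel) : bool := (pickle a <= pickle b)%N.

Definition msetN (s : seq nlabel) : nlabel := GenTree.Node 0 (sort nl_le s).

(* ell with fuel; fuel > height suffices, and height < #|node N| *)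
Fixpoint ell_fuel (N : network) (n : nat) (v : node N) : nlabel :=
  match n with
  | 0 => GenTree.Node 1 [::] (* never reached with enough fuel *)
  | n'.+1 =>
    match [pick i | leaf_lab N i == v] with
    | Some i => GenTree.Leaf i
    | None => msetN [seq ell_fuel n' w | w <- enum (edge v)]
    end
  end.

Definition ell (N : network) (v : node N) : nlabel := ell_fuel #|node N| v.

Definition Upsilon (N : network) : seq nlabel := [seq ell v | v <- enum (node N)].

(* |M1 symdiff M2| = sum over x of |M1(x) - M2(x)| *)
Definition symdiff_size (M1 M2 : seq nlabel) : nat :=
  \sum_(x <- undup (M1 ++ M2))
     ((count_mem x M1 - count_mem x M2) + (count_mem x M2 - count_mem x M1)).

End PhyloNetworks.

From Pilot Require Import Defs.
From mathcomp Require Import all_boot all_order all_algebra.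
From mathcomp Require Import boolp.

Set Implicit Arguments.
Unset Strict Implicit.
Unset Printing Implicit Defensive.

(* Two nodes are equivalent exactly when their nested labels coincide: by
   induction on height, a matching of equivalent children is the same as a
   permutation between the multisets of child labels.  Hence kappa v is the
   multiplicity of ell v in Upsilon(N), and a maximal set of pairwise
   non-equivalent nodes contains exactly one node per distinct label.  So the
   two sums of delta add up the truncated differences M1(x) - M2(x) and
   M2(x) - M1(x) over all labels x, which is the symmetric difference. *)

Lemma count_enum_card (T : finType) (p : pred T) : count p (enum T) = #|p|.
Proof. by rewrite cardE enumT -size_filter /enum_mem. Qed.

Lemma perm_map_matching (T1 T2 R : eqType) (g1 : T1 -> R) (g2 : T2 -> R)
    (y0 : T2) (a : seq T1) (b : seq T2) :
  uniq a -> uniq b -> perm_eq (map g1 a) (map g2 b) ->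
  exists f : T1 -> T2,
    [/\ forall c, c \in a -> f c \in b /\ g2 (f c) = g1 c,
        {in a &, injective f} &
        forall d, d \in b -> exists2 c, c \in a & f c = d].
Proof.
elim: a b => [|x a IH] b ua ub hab.
  move: hab => /perm_size; rewrite !size_map; case: b ub => // _ _.
  by exists (fun _ => y0); split.
move: ua => /= /andP[xNa ua].
have /mapP[y yb g2y] : g1 x \in map g2 b by rewrite -(perm_mem hab) mem_head.
have hab' : perm_eq (map g1 a) (map g2 (rem y b)).
  by move: (perm_trans hab (perm_map g2 (perm_to_rem yb))); rewrite /= -g2y perm_cons.
have [f [f_in f_inj f_onto]] := IH _ ua (rem_uniq y ub) hab'.
have in_rem d : (d \in rem y b) = (d != y) && (d \in b) by rewrite mem_rem_uniq // inE.
exists (fun c => if c == x then y else f c); split.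
- move=> c; rewrite in_cons; case: eqP => [-> _ | _ /= ca] //.
  by have [+ ->] := f_in c ca; rewrite in_rem => /andP[].
- move=> c1 c2; rewrite !in_cons.
  case: (eqVneq c1 x) => [->|_]; case: (eqVneq c2 x) => [->|_] //= h1 h2.
  + by move=> fy; have := (f_in c2 h2).1; rewrite -fy in_rem eqxx.
  + by move=> fy; have := (f_in c1 h1).1; rewrite fy in_rem eqxx.
  + exact: f_inj.
- move=> d db; case: (eqVneq d y) => [->|dNy]; first by exists x; rewrite ?mem_head ?eqxx.
  have [|c ca <-] := f_onto d; first by rewrite in_rem dNy.
  exists c; first by rewrite in_cons ca orbT.
  by case: eqP => // cx; move: xNa; rewrite -cx ca.
Qed.

Lemma big_undup_restrict (T : eqType) (s s1 : seq T) (G : T -> nat) :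
  uniq s -> {subset s1 <= s} -> (forall x, x \notin s1 -> G x = 0) ->
  \sum_(x <- s) G x = \sum_(x <- undup s1) G x.
Proof.
move=> us s1s G0.
rewrite (bigID (mem s1)) /= [X in _ + X]big1 ?addn0 => [|x /G0 //].
rewrite -big_filter; apply/perm_big/uniq_perm; rewrite ?filter_uniq ?undup_uniq //.
by move=> x; rewrite mem_filter mem_undup; case s1x: (x \in s1); rewrite //= s1s.
Qed.

Section NestedLabels.

Variable S : finType.

Lemma nl_le_total : total (@nl_le S).
Proof. by move=> a b; rewrite /nl_le leq_total. Qed.

Lemma nl_le_trans : transitive (@nl_le S).
Proof. by move=> a b c; rewrite /nl_le; apply: leq_trans. Qed.

Lemma nl_le_anti : antisymmetric (@nl_le S).
Proof. by move=> a b /anti_leq; apply: (pcan_inj (@pickleK (nlabel S))). Qed.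

Lemma msetN_inj (s1 s2 : seq (nlabel S)) : (msetN s1 = msetN s2) <-> perm_eq s1 s2.
Proof.
rewrite (sameP (perm_sortP nl_le_total nl_le_trans nl_le_anti _ _) eqP).
by rewrite /msetN; split=> [[->] | /eqP ->].
Qed.

Section Network.

Variable N : network S.

(* The number of descendants strictly decreases along arcs, so it bounds the
   height and measures how much fuel ell_fuel needs. *)
Definition ndesc (v : node N) : nat := #|[pred w | connect (@edge S N) v w]|.

Lemma ndesc_child v w : edge v w -> ndesc w < ndesc v.
Proof.
move=> vw; apply/proper_card/properP; split.
  by apply/subsetP => x; rewrite !inE; apply: connect_trans (connect1 vw).
by exists v; rewrite !inE ?connect0 ?(net_acyclic vw).
Qed.

Lemma ndesc_gt0 v : 0 < ndesc v.
Proof. by apply/card_gt0P; exists v; rewrite inE /= connect0. Qed.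

Lemma ndesc_le_card v : ndesc v <= #|node N|.
Proof. exact: max_card. Qed.

Lemma ell_fuel_stable n m v :
  ndesc v <= n -> ndesc v <= m -> ell_fuel n v = ell_fuel m v.
Proof.
elim: n m v => [|n IH] [|m] v hn hm;
  try by move: (ndesc_gt0 v); rewrite ltnNge ?hn ?hm.
rewrite /=; case: pickP => // _; congr msetN.
apply/eq_in_map => w; rewrite mem_enum => vw.
by apply: IH; rewrite -ltnS; apply: leq_trans (ndesc_child vw) _.
Qed.

Lemma ellE v :
  ell v = if [pick i | leaf_lab N i == v] is Some i then GenTree.Leaf i
          else msetN [seq ell w | w <- enum (edge v)].
Proof.
rewrite {1}/ell; have := ndesc_le_card v.
case E: #|node N| => [|n] hv; first by move: (ndesc_gt0 v); rewrite ltnNge hv.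
rewrite /=; case: pickP => // _; congr msetN.
apply/eq_in_map => w; rewrite mem_enum => vw.
apply: ell_fuel_stable (ndesc_le_card w).
by rewrite -ltnS -E; apply: leq_trans (ndesc_child vw) (ndesc_le_card v).
Qed.

Lemma is_leafP (v : node N) : is_leaf v -> exists i, v = leaf_lab N i.
Proof. by rewrite /is_leaf net_leaves => /codomP. Qed.

Lemma ell_leaf i : ell (leaf_lab N i) = GenTree.Leaf i.
Proof.
rewrite ellE; case: pickP => [j /eqP /net_lab_inj -> // | /(_ i)].
by rewrite eqxx.
Qed.

Lemma ell_node (v : node N) :
  ~~ is_leaf v -> ell v = msetN [seq ell w | w <- enum (edge v)].
Proof.
move=> vNleaf; rewrite ellE; case: pickP => // i /eqP vi.
by move: vNleaf; rewrite /is_leaf net_leaves -vi codom_f.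
Qed.

End Network.

Lemma equiv_ell (N1 N2 : network S) (u : node N1) (v : node N2) :
  Defs.equiv u v -> ell u = ell v.
Proof.
elim=> [i | u' v' f u'Nleaf v'Nleaf f_edge f_inj f_onto _ IH]; first by rewrite !ell_leaf.
rewrite !ell_node //; apply/msetN_inj.
have -> : [seq ell w | w <- enum (edge u')] = [seq ell (f w) | w <- enum (edge u')].
  by apply/eq_in_map => w; rewrite mem_enum => /IH.
rewrite (map_comp (@ell S N2) f); apply/perm_map/uniq_perm; rewrite ?enum_uniq //.
  by rewrite map_inj_in_uniq ?enum_uniq // => x y; rewrite !mem_enum; apply: f_inj.
move=> d; rewrite mem_enum; apply/mapP/idP => [[c] | /f_onto[c uc <-]].
  by rewrite mem_enum => /f_edge + ->.
by exists c; rewrite ?mem_enum.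
Qed.

Lemma ell_equiv (N1 N2 : network S) (u : node N1) (v : node N2) :
  ell u = ell v -> Defs.equiv u v.
Proof.
move: (ndesc_le_card u); elim: #|node N1| u v => [|n IH] u v hu.
  by move: (ndesc_gt0 u); rewrite ltnNge hu.
have [/is_leafP[i ->] | uNleaf] := boolP (is_leaf u);
  have [/is_leafP[j ->] | vNleaf] := boolP (is_leaf v);
  rewrite ?ell_leaf ?ell_node //; first by case=> ->; apply: equiv_leaf.
move/msetN_inj => hp.
have [f [f_in f_inj f_onto]] := perm_map_matching v (enum_uniq _) (enum_uniq _) hp.
apply: (equiv_node (f := f)) => //.
- move=> c uc; have /f_in[+ _] : c \in enum (edge u) by rewrite mem_enum.
  by rewrite mem_enum.
- by move=> x y ux uy; apply: f_inj; rewrite mem_enum.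
- move=> d vd; have [|c] := f_onto d; first by rewrite mem_enum.
  by rewrite mem_enum; exists c.
- move=> c uc; have /f_in[_ fc] : c \in enum (edge u) by rewrite mem_enum.
  by apply: IH (esym fc); rewrite -ltnS; apply: leq_trans (ndesc_child uc) hu.
Qed.

Lemma equivE (N1 N2 : network S) (u : node N1) (v : node N2) :
  Defs.equiv u v <-> ell u = ell v.
Proof. by split; [apply: equiv_ell | apply: ell_equiv]. Qed.

Section Multiplicities.

Variable N : network S.

Lemma kappa_count (v : node N) : kappa v = count_mem (ell v) (Upsilon N).
Proof.
rewrite /kappa /Upsilon count_map count_enum_card; apply: eq_card => w.
by rewrite inE; apply/asboolP/eqP => [/equivE | /esym/equivE].
Qed.

Lemma maximal_noneq_rep (U : {set node N}) : maximal_noneq U ->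
  forall w : node N, exists2 u, u \in U & ell u = ell w.
Proof.
move=> [U_noneq U_max] w.
have [/existsP[u /andP[uU /eqP]] | ] :=
  boolP [exists u, (u \in U) && (ell u == ell w)]; first by exists u.
rewrite negb_exists => /forallP noRep.
have wU : w \in U.
  rewrite -(U_max (w |: U)) ?subsetUr ?setU11 // => a b.
  rewrite !in_setU1 => /orP[/eqP-> | aU] /orP[/eqP-> | bU]; rewrite ?eqxx //.
  - by move=> _ /equivE wb; move: (noRep b); rewrite bU wb eqxx.
  - by move=> _ /equivE aw; move: (noRep a); rewrite aU aw eqxx.
  - exact: U_noneq.
by move: (noRep w); rewrite wU eqxx.
Qed.

Lemma big_maximal_noneq (U : {set node N}) (G : nlabel S -> nat) :
  maximal_noneq U -> \sum_(v in U) G (ell v) = \sum_(x <- undup (Upsilon N)) G x.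
Proof.
move=> hU; rewrite -big_enum -(big_map (@ell S N) predT G).
apply/perm_big/uniq_perm; rewrite ?undup_uniq //.
  rewrite map_inj_in_uniq ?enum_uniq // => u w; rewrite !mem_enum => uU wU uw.
  by case: (eqVneq u w) => // uNw; case: (hU.1 u w uU wU uNw); apply/equivE.
move=> x; rewrite mem_undup; apply/mapP/mapP => [[u _ ->] | [w _ ->]].
  by exists u; rewrite ?mem_enum.
by have [u uU <-] := maximal_noneq_rep hU w; exists u; rewrite ?mem_enum.
Qed.

End Multiplicities.

Lemma delta_count (N1 N2 : network S) (U2 : {set node N2}) (v : node N1) :
  maximal_noneq U2 ->
  delta U2 v = count_mem (ell v) (Upsilon N1) - count_mem (ell v) (Upsilon N2).
Proof.
move=> hU; rewrite /delta kappa_count.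
case: pickP => [w /andP[_ /asboolP /equivE vw] | noRep].
  by rewrite kappa_count vw.
suff -> : count_mem (ell v) (Upsilon N2) = 0 by rewrite subn0.
apply/count_memPn/mapP => -[w _ vw].
have [u uU uw] := maximal_noneq_rep hU w.
have vu : `[< Defs.equiv v u >] by apply/asboolP/equivE; rewrite uw vw.
by move: (noRep u); rewrite uU vu.
Qed.

Lemma sum_delta (N1 N2 : network S) (U1 : {set node N1}) (U2 : {set node N2}) :
  maximal_noneq U1 -> maximal_noneq U2 ->
  \sum_(v in U1) delta U2 v =
  \sum_(x <- undup (Upsilon N1 ++ Upsilon N2))
    (count_mem x (Upsilon N1) - count_mem x (Upsilon N2)).
Proof.
set G := fun x => count_mem x (Upsilon N1) - count_mem x (Upsilon N2).
move=> hU1 hU2; rewrite (eq_bigr (G \o @ell S N1) (fun v _ => delta_count v hU2)).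
rewrite (big_maximal_noneq G hU1).
apply/esym/big_undup_restrict; rewrite ?undup_uniq //.
  by move=> x; rewrite !mem_undup mem_cat => ->.
by move=> x /count_memPn ->.
Qed.

End NestedLabels.

Theorem proposition3 (S : finType) (N1 N2 : network S)
    (U1 : {set node N1}) (U2 : {set node N2}) :
  maximal_noneq U1 -> maximal_noneq U2 ->
  nakhleh U1 U2 = ((symdiff_size (Upsilon N1) (Upsilon N2))%:R / 2%:R)%R.
Proof.
move=> hU1 hU2; rewrite /nakhleh /symdiff_size big_split /=.
rewrite (sum_delta hU1 hU2) (sum_delta hU2 hU1).
by rewrite (perm_big _ (perm_undup (perm_mem (permEl (perm_catC (Upsilon N2) _))))).
Qed.
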